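(* There is an absolute constant $c>0$ such that for all $\varepsilon,\delta\in(0,1)$ and every positive integer $m< c\,\varepsilon^{-1}\delta^{-1}$, there exists a finite multiset $A$ of points in $\mathbb{R}^d$ such that, if $S$ consists of $m$ points drawn independently and uniformly at random from $A$, then the empirical mean $\hat\mu=\frac1m\sum_{p\in S}p$ fails to be a $(1+\varepsilon)$-approximate mean of $A$ with probability greater than $\delta$. In other words, $\Omega(\varepsilon^{-1}\delta^{-1})$ independently sampled points are required for the empirical mean to be a $(1+\varepsilon)$-approximate mean with probability at least $1-\delta$ on every instance.
   Context: For a finite multiset $A\subset\mathbb{R}^d$, let $\mathrm{Opt}=\min_{x\in\mathbb{R}^d}\sum_{p\in A}\|p-x\|^2$. A point $x$ is a $(1+\varepsilon)$-approximate mean of $A$ if $\sum_{p\in A}\|p-x\|^2\le(1+\varepsilon)\mathrm{Opt}$. *)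

From HB Require Import structures.
From mathcomp Require Import all_boot all_order all_algebra.
From mathcomp Require Import boolp classical_sets reals.
Set Implicit Arguments. Unset Strict Implicit. Unset Printing Implicit Defensive.
Import Order.TTheory GRing.Theory Num.Theory.
Local Open Scope ring_scope.
Local Open Scope classical_set_scope.

(* Points of R^d are row vectors 'rV[R]_d. A finite multiset of n points is
   A : 'I_n -> 'rV[R]_d (repetitions allowed). *)

Definition sqdist (R : realType) (d : nat) (p x : 'rV[R]_d) : R :=
  \sum_(j < d) (p ord0 j - x ord0 j) ^+ 2.

Definition cost (R : realType) (d n : nat) (A : 'I_n -> 'rV[R]_d) (x : 'rV[R]_d) : R :=
  \sum_(i < n) sqdist (A i) x.

(* Opt = min_x cost A x (taken as the infimum; the minimum is attained) *)
Definition Opt (R : realType) (d n : nat) (A : 'I_n -> 'rV[R]_d) : R :=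
  inf (range (cost A)).

Definition approx_mean (R : realType) (d n : nat) (A : 'I_n -> 'rV[R]_d)
  (eps : R) (x : 'rV[R]_d) : bool :=
  cost A x <= (1 + eps) * Opt A.

Definition emp_mean (R : realType) (d n m : nat) (A : 'I_n -> 'rV[R]_d)
  (S : {ffun 'I_m -> 'I_n}) : 'rV[R]_d :=
  (m%:R)^-1 *: \sum_(k < m) A (S k).

(* Probability, over m i.i.d. uniform draws from A (uniform over the n^m index
   tuples), that the empirical mean is NOT a (1+eps)-approximate mean. *)
Definition fail_prob (R : realType) (d n m : nat) (A : 'I_n -> 'rV[R]_d) (eps : R) : R :=
  (#|[set S : {ffun 'I_m -> 'I_n} | ~~ approx_mean A eps (emp_mean A S)]|)%:R
  / ((n ^ m)%N)%:R.

(* The hard instance consists of n + 1 points: the all-ones vector 1 (the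
   "spike") and n copies of 0, with n about 2m + 4 eps m^2.  The empirical mean
   of a sample is (h/m) 1, where h is the number of draws of the spike, and
   t 1 is a (1 + eps)-approximate mean iff ((n + 1) t - 1)^2 <= eps n.  A sample
   that hits the spike overshoots: its mean is at least 1/m, far above the
   optimum 1/(n + 1).  A sample that misses it has mean 0, which also fails
   when eps n < 1, i.e. when eps m <= 1/4; then the failure probability is 1.
   When eps m > 1/4, the failure probability is at least the hit probability
   1 - (n/(n+1))^m >= m/(n + m) (Bernoulli's inequality), and this exceeds
   delta as soon as eps delta m < 1/32. *)

From HB Require Import structures.
From mathcomp Require Import all_boot all_order all_algebra.
From mathcomp Require Import boolp classical_sets reals.
From mathcomp Require Import ring lra.
Set Implicit Arguments. Unset Strict Implicit. Unset Printing Implicit Defensive.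
Import Order.TTheory GRing.Theory Num.Theory.
Local Open Scope ring_scope.

Lemma cost_ge0 (R : realType) (d n : nat) (A : 'I_n -> 'rV[R]_d) (x : 'rV[R]_d) :
  0 <= cost A x.
Proof. by apply: sumr_ge0 => i _; apply: sumr_ge0 => j _; apply: sqr_ge0. Qed.

Lemma Opt_le_cost (R : realType) (d n : nat) (A : 'I_n -> 'rV[R]_d) (x : 'rV[R]_d) :
  Opt A <= cost A x.
Proof.
apply: ge_inf; last by exists x.
by exists 0 => _ [y _ <-]; apply: cost_ge0.
Qed.

Lemma sqdist_scale_const (R : realType) (d : nat) (a b : R) :
  sqdist (a *: (const_mx 1 : 'rV[R]_d)) (b *: const_mx 1) = d%:R * (a - b) ^+ 2.
Proof.
rewrite /sqdist; under eq_bigr do rewrite !mxE !mulr1.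
by rewrite sumr_const card_ord mulr_natl.
Qed.

Section FailProb.
Variables (R : realType) (d n m : nat) (A : 'I_n.+1 -> 'rV[R]_d) (eps : R).

Let failing := [pred S : {ffun 'I_m -> 'I_n.+1} | ~~ approx_mean A eps (emp_mean A S)].

Lemma fail_probE : fail_prob m A eps = #|failing|%:R / (n.+1 ^ m)%:R.
Proof.
congr (_%:R / _); apply: eq_card => S; rewrite inE /=.
by apply/idP/idP => [/set_mem | /mem_set].
Qed.

Lemma fail_prob_eq1 :
  (forall S : {ffun 'I_m -> 'I_n.+1}, ~~ approx_mean A eps (emp_mean A S)) ->
  fail_prob m A eps = 1.
Proof.
move=> all_fail; rewrite fail_probE.
have -> : #|failing| = #|{ffun 'I_m -> 'I_n.+1}|.
  by apply: eq_card => S; rewrite !inE all_fail.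
by rewrite card_ffun !card_ord divff // pnatr_eq0 -lt0n expn_gt0.
Qed.

Lemma fail_prob_ge_hit (i0 : 'I_n.+1) :
  (forall S : {ffun 'I_m -> 'I_n.+1},
     i0 \in codom S -> ~~ approx_mean A eps (emp_mean A S)) ->
  1 - (n%:R / n.+1%:R) ^+ m <= fail_prob m A eps.
Proof.
move=> hit_fails.
set missing := [set S : {ffun 'I_m -> 'I_n.+1} | S \in ffun_on (predC1 i0)].
have card_missing : #|missing| = (n ^ m)%N.
  by rewrite cardsE card_ffun_on cardC1 !card_ord.
have hit_sub : ~: missing \subset failing.
  apply/fintype.subsetP => S; rewrite !inE => /ffun_onP not_missing; apply: hit_fails.
  apply/negPn/negP => i0_miss; apply: not_missing => k.
  by rewrite !inE; apply: contraNneq i0_miss => <-; apply: codom_f.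
have N_pos : 0 < (n.+1 ^ m)%:R :> R by rewrite ltr0n expn_gt0.
rewrite fail_probE ler_pdivlMr // expr_div_n -!natrX mulrBl divfK ?gt_eqF // mul1r.
rewrite lerBlDr -natrD ler_nat.
have card_total := cardsC missing.
rewrite card_missing card_ffun !card_ord in card_total.
by rewrite -card_total addnC leq_add2r subset_leq_card.
Qed.

End FailProb.

Lemma bernoulli_ineq (R : realDomainType) (x : R) (m : nat) :
  -1 <= x -> 1 + m%:R * x <= (1 + x) ^+ m.
Proof.
move=> x_ge; elim: m => [|m IH]; first by rewrite mul0r addr0 expr0.
have m_ge0 := ler0n R m.
rewrite exprSr -natr1; nra.
Qed.

Lemma expr_ratio_le (R : realFieldType) (n m : nat) : (0 < n)%N ->
  (n%:R / n.+1%:R) ^+ m <= n%:R / (n + m)%:R :> R.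
Proof.
move=> n_gt0; have n_pos : 0 < n%:R :> R by rewrite ltr0n.
have ratio_gt0 (k : nat) : 0 < 1 + k%:R / n%:R :> R.
  have : 0 <= k%:R / n%:R :> R by rewrite divr_ge0.
  lra.
have ratioE (k : nat) : n%:R / (n + k)%:R = (1 + k%:R / n%:R)^-1 :> R.
  by rewrite natrD; field; rewrite -natrD !pnatr_eq0 -!lt0n addn_gt0 n_gt0.
rewrite -addn1 !ratioE exprVn lef_pV2 ?posrE ?exprn_gt0 //.
by rewrite mul1r bernoulli_ineq // (le_trans (lerN10 R)) ?invr_ge0.
Qed.

Lemma sqr_gap_of_hit (R : realFieldType) (N m eps s : R) :
  0 < m -> 0 < eps -> 2 * m <= N -> 4 * eps * m ^+ 2 <= N -> 1 <= s ->
  eps * (N - 1) < (N * (s / m) - 1) ^+ 2.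
Proof.
move=> m_gt0 eps_gt0 le2m le4em s_ge1.
set u := N / m.
have NE : N = u * m by rewrite /u divfK ?gt_eqF.
have u_ge2 : 2 <= u by rewrite /u ler_pdivlMr.
have usE : N * (s / m) = u * s by rewrite mulrA mulrAC.
have gap : u / 2 <= u * s - 1 by nra.
have u_ge4em : 4 * eps * m <= u.
  by rewrite -(ler_pM2r m_gt0) -NE; move: le4em; rewrite expr2 mulrA.
have sq : (u / 2) ^+ 2 <= (u * s - 1) ^+ 2 by rewrite ler_sqr ?nnegrE //; lra.
rewrite usE NE; nra.
Qed.

Definition spike (R : realType) (d n : nat) : 'I_n.+1 -> 'rV[R]_d :=
  fun i => (i == ord0)%:R *: const_mx 1.
Arguments spike : clear implicits.

Section Spike.
Variables (R : realType) (d n : nat).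

Lemma cost_spike (t : R) :
  cost (spike R d n) (t *: const_mx 1) = d%:R * (n.+1%:R * t ^+ 2 - 2 * t + 1).
Proof.
rewrite /cost big_ord_recl; under eq_bigr do rewrite sqdist_scale_const /=.
by rewrite sqdist_scale_const /= sumr_const card_ord -mulr_natr -natr1; ring.
Qed.

Lemma Opt_spike_le : Opt (spike R d n) <= d%:R * (1 - n.+1%:R^-1).
Proof.
apply: (le_trans (Opt_le_cost (spike R d n) (n.+1%:R^-1 *: const_mx 1))).
rewrite cost_spike ler_wpM2l // expr2 mulrA divff ?pnatr_eq0 // mul1r.
set u := n.+1%:R^-1; lra.
Qed.

Lemma spike_not_approx_mean (eps t : R) : (0 < d)%N -> 0 < eps ->
  eps * n%:R < (n.+1%:R * t - 1) ^+ 2 ->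
  ~~ approx_mean (spike R d n) eps (t *: const_mx 1).
Proof.
move=> d_gt0 eps_gt0 gap; rewrite /approx_mean -ltNge cost_spike.
have N_gt0 : 0 < n.+1%:R :> R by rewrite ltr0n.
apply: (le_lt_trans (ler_wpM2l _ Opt_spike_le)); first lra.
rewrite mulrCA ltr_pM2l ?ltr0n //.
have costE : n.+1%:R * t ^+ 2 - 2 * t + 1 =
    n.+1%:R^-1 * ((n.+1%:R * t - 1) ^+ 2 + n%:R) :> R.
  by rewrite -natr1; field; rewrite natr1 gt_eqF.
have OptE : (1 + eps) * (1 - n.+1%:R^-1) = n.+1%:R^-1 * ((1 + eps) * n%:R) :> R.
  by rewrite -natr1; field; rewrite natr1 gt_eqF.
rewrite costE OptE ltr_pM2l ?invr_gt0 //; lra.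
Qed.

Lemma emp_mean_spike (m : nat) (S : {ffun 'I_m -> 'I_n.+1}) :
  emp_mean (spike R d n) S = ((\sum_(k < m) (S k == ord0)%:R) / m%:R) *: const_mx 1.
Proof. by rewrite /emp_mean -scaler_suml scalerA mulrC. Qed.

Lemma spike_hit_not_approx_mean (m : nat) (eps : R) (S : {ffun 'I_m -> 'I_n.+1}) :
  (0 < d)%N -> 0 < eps -> (2 * m <= n.+1)%N -> 4 * eps * m%:R ^+ 2 <= n.+1%:R ->
  ord0 \in codom S -> ~~ approx_mean (spike R d n) eps (emp_mean (spike R d n) S).
Proof.
move=> d_gt0 eps_gt0 le2m le4em /codomP[k Sk].
have m_gt0 : 0 < m%:R :> R by rewrite ltr0n (leq_ltn_trans _ (ltn_ord k)).
rewrite emp_mean_spike; apply: spike_not_approx_mean => //.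
have -> : n%:R = n.+1%:R - 1 :> R by rewrite -natr1 addrK.
apply: sqr_gap_of_hit => //; first by rewrite -natrM ler_nat.
rewrite (bigD1 k) //= -Sk eqxx -[X in X <= _]addr0 lerD2l.
by apply: sumr_ge0 => i _; apply: ler0n.
Qed.

Lemma spike_miss_not_approx_mean (m : nat) (eps : R) (S : {ffun 'I_m -> 'I_n.+1}) :
  (0 < d)%N -> 0 < eps -> eps * n%:R < 1 ->
  ord0 \notin codom S -> ~~ approx_mean (spike R d n) eps (emp_mean (spike R d n) S).
Proof.
move=> d_gt0 eps_gt0 small miss; rewrite emp_mean_spike big1 ?mul0r.
  by apply: spike_not_approx_mean; rewrite // mulr0 sub0r sqrrN expr1n.
move=> k _; apply/eqP; rewrite pnatr_eq0 eqb0.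
by apply: contraNneq miss => <-; apply: codom_f.
Qed.

End Spike.

Lemma miss_regime_bound (R : realFieldType) (eps : R) (m n : nat) :
  0 < eps -> 4 * eps * m%:R <= 1 -> n%:R <= 2 * m%:R + 4 * eps * m%:R ^+ 2 ->
  eps * n%:R < 1.
Proof.
move=> eps_gt0 small n_le; apply: le_lt_trans (ler_wpM2l (ltW eps_gt0) n_le) _.
have em_ge0 : 0 <= eps * m%:R by rewrite mulr_ge0 ?ler0n // ltW.
nra.
Qed.

Lemma hit_regime_bound (R : realFieldType) (eps delta : R) (m n : nat) :
  0 < eps -> 0 < delta -> (0 < m)%N -> eps * delta * m%:R < 1/32 ->
  1 < 4 * eps * m%:R -> n%:R <= 2 * m%:R + 4 * eps * m%:R ^+ 2 ->
  delta < 1 - n%:R / (n + m)%:R.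
Proof.
move=> eps_gt0 delta_gt0 m_gt0 edm large n_le.
have m_pos : 0 < m%:R :> R by rewrite ltr0n.
have delta_small : delta < 1/8 by nra.
have key : delta * (n%:R + m%:R) < m%:R.
  by have := ler_wpM2l (ltW delta_gt0) n_le; nra.
have nm_pos : 0 < n%:R + m%:R :> R by rewrite ltr_wpDl ?ler0n.
have -> : 1 - n%:R / (n + m)%:R = m%:R / (n%:R + m%:R) :> R.
  by rewrite natrD; field; rewrite gt_eqF.
by rewrite ltr_pdivlMr.
Qed.

Theorem theorem5p2 (R : realType) :
  exists c : R, 0 < c /\
    forall (d : nat), (0 < d)%N ->
    forall (eps delta : R), 0 < eps < 1 -> 0 < delta < 1 ->
    forall (m : nat), (0 < m)%N -> m%:R < c / (eps * delta) ->
    exists (n : nat) (A : 'I_n -> 'rV[R]_d),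
      (0 < n)%N /\ delta < fail_prob m A eps.
Proof.
exists (1/32); split; first lra.
move=> d d_gt0 eps delta /andP[eps_gt0 _] /andP[delta_gt0 delta_lt1] m m_gt0 m_lt.
have edm : eps * delta * m%:R < 1/32.
  by move: m_lt; rewrite ltr_pdivlMr ?mulr_gt0 // mulrC.
have x_ge0 : 0 <= 4 * eps * m%:R ^+ 2 by rewrite !mulr_ge0 ?sqr_ge0 // ltW.
have /andP[trunc_le trunc_gt] := truncn_itv x_ge0.
set n := (2 * m + Num.truncn (4 * eps * m%:R ^+ 2))%N.
have n_le : n%:R <= 2 * m%:R + 4 * eps * m%:R ^+ 2 by rewrite natrD natrM lerD2l.
have hit_fails (S : {ffun 'I_m -> 'I_n.+1}) :
    ord0 \in codom S -> ~~ approx_mean (spike R d n) eps (emp_mean (spike R d n) S).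
  apply: spike_hit_not_approx_mean => //; first by rewrite leqW // leq_addr.
  by rewrite (le_trans (ltW trunc_gt)) // ler_nat ltnS leq_addl.
exists n.+1, (spike R d n); split => //.
have [small|large] := lerP (4 * eps * m%:R) 1.
- rewrite fail_prob_eq1 // => S; case: (boolP (ord0 \in codom S)) => [/hit_fails //|].
  by apply: spike_miss_not_approx_mean => //; apply: miss_regime_bound small n_le.
- have n_gt0 : (0 < n)%N by rewrite addn_gt0 muln_gt0 m_gt0.
  apply: lt_le_trans (fail_prob_ge_hit hit_fails).
  apply: lt_le_trans (lerB (lexx 1) (expr_ratio_le _ m n_gt0)).
  exact: hit_regime_bound eps_gt0 delta_gt0 m_gt0 edm large n_le.
Qed.
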